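(* $\mathcal{F}_1^{\sigma_1}\not\leq_e\mathcal{F}_2^{\sigma_2}$ and $\mathcal{F}_2^{\sigma_2}\not\leq_e\mathcal{F}_1^{\sigma_1}$ for all formalisms $\mathcal{F}_1,\mathcal{F}_2\in\{\mathrm{AF},\mathrm{SETAF},\mathrm{BADF},\mathrm{ADF}\}$ and all semantics $\sigma_1,\sigma_2\in\{\mathrm{adm},\mathrm{com},\mathrm{prf},\mathrm{mod}\}$ with $\sigma_1\neq\sigma_2$.
   Context: Let $A$ be a finite set of statements; an interpretation is $v:A\to\{\mathbf{t},\mathbf{f},\mathbf{u}\}$. The information ordering is $\mathbf{u}<_i\mathbf{t}$, $\mathbf{u}<_i\mathbf{f}$, extended pointwise; $[v]_2$ is the set of two-valued interpretations extending $v$. An ADF is $D=(A,L,C)$ with an acceptance formula $\varphi_a$ over the parents of each statement $a$. $\Gamma_D(v)(a)$ is the greatest lower bound w.r.t. $\leq_i$ (consensus: $\mathbf{t}$ if all $\mathbf{t}$, $\mathbf{f}$ if all $\mathbf{f}$, else $\mathbf{u}$) of $\{w(\varphi_a)\mid w\in[v]_2\}$. $v$ is admissible iff $v\leq_i\Gamma_D(v)$, complete iff $\Gamma_D(v)=v$, preferred iff $\leq_i$-maximal admissible, a two-valued model iff two-valued and $\Gamma_D(v)=v$. BADFs are ADFs in which every link is supporting or attacking; AFs $(A,R)$ correspond to ADFs with $\varphi_a=\bigwedge_{(b,a)\in R}\neg b$; SETAFs $(A,X)$ correspond to ADFs with $\varphi_a=\bigwedge_{(B,a)\in X}\bigvee_{a'\in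 B}\neg a'$; all inherit the four semantics. The signature of formalism $\mathcal{F}$ under semantics $\sigma$ is $\Sigma^\sigma_\mathcal{F}=\{\sigma(kb)\mid kb\in\mathcal{F}\}$, and $\mathcal{F}_1^{\sigma_1}\leq_e\mathcal{F}_2^{\sigma_2}$ iff $\Sigma^{\sigma_1}_{\mathcal{F}_1}\subseteq\Sigma^{\sigma_2}_{\mathcal{F}_2}$ (taken over the same vocabularies). *)

From mathcomp Require Import all_boot.
Set Implicit Arguments. Unset Strict Implicit. Unset Printing Implicit Defensive.

(* Three truth values: t = Some true, f = Some false, u = None. *)
Notation val3 := (option bool).

Inductive formula (A : Type) : Type :=
| FTop | FBot | FVar of A | FNeg of formula A
| FAnd of formula A & formula A | FOr of formula A & formula A.
Arguments FTop {A}. Arguments FBot {A}.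

Fixpoint feval (A : Type) (w : A -> bool) (phi : formula A) : bool :=
  match phi with
  | FTop => true | FBot => false | FVar a => w a
  | FNeg p => ~~ feval w p
  | FAnd p q => feval w p && feval w q
  | FOr p q => feval w p || feval w q
  end.

Fixpoint occurs (A : eqType) (b : A) (phi : formula A) : bool :=
  match phi with
  | FTop | FBot => false | FVar a => a == b
  | FNeg p => occurs b p
  | FAnd p q | FOr p q => occurs b p || occurs b q
  end.

Definition bigAnd (A : Type) (s : seq (formula A)) := foldr (@FAnd A) FTop s.
Definition bigOr (A : Type) (s : seq (formula A)) := foldr (@FOr A) FBot s.

Record adf (A : finType) := ADF { link : rel A; acc : A -> formula A }.

Definition adf_wf (A : finType) (D : adf A) : Prop :=
  forall a b : A, occurs b (acc D a) -> link D b a.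

Definition interp (A : finType) := {ffun A -> val3}.

Definition leq_i (A : finType) (v w : interp A) : bool :=
  [forall a, (v a == None) || (v a == w a)].

Definition ext2 (A : finType) (v : interp A) (w : {ffun A -> bool}) : bool :=
  [forall a, if v a is Some b then w a == b else true].

Definition Gamma (A : finType) (D : adf A) (v : interp A) : interp A :=
  [ffun a => if [forall w : {ffun A -> bool}, ext2 v w ==> feval w (acc D a)]
             then Some true
             else if [forall w : {ffun A -> bool}, ext2 v w ==> ~~ feval w (acc D a)]
             then Some false else None].

Definition admissible (A : finType) (D : adf A) (v : interp A) : Prop :=
  leq_i v (Gamma D v).
Definition complete (A : finType) (D : adf A) (v : interp A) : Prop :=
  Gamma D v = v.
Definition preferred (A : finType) (D : adf A) (v : interp A) : Prop :=
  admissible D v /\ forall w, admissible D w -> leq_i v w -> w = v.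
Definition two_valued_model (A : finType) (D : adf A) (v : interp A) : Prop :=
  (forall a, v a != None) /\ Gamma D v = v.

Inductive semantics := adm | com | prf | mod.

Definition sem (s : semantics) (A : finType) (D : adf A) : interp A -> Prop :=
  match s with
  | adm => admissible D | com => complete D
  | prf => preferred D | mod => two_valued_model D
  end.

Definition upd (A : finType) (w : {ffun A -> bool}) (b : A) (x : bool) :
  {ffun A -> bool} := [ffun c => if c == b then x else w c].

Definition supporting (A : finType) (D : adf A) (b a : A) : Prop :=
  forall w, feval (upd w b false) (acc D a) -> feval (upd w b true) (acc D a).
Definition attacking (A : finType) (D : adf A) (b a : A) : Prop :=
  forall w, feval (upd w b true) (acc D a) -> feval (upd w b false) (acc D a).

Definition adf_of_af (A : finType) (R : rel A) : adf A :=
  ADF R (fun a => bigAnd [seq FNeg (FVar b) | b <- enum A & R b a]).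

Definition setaf_wf (A : finType) (X : {set {set A} * A}) : Prop :=
  forall B a, (B, a) \in X -> B != set0.
Definition adf_of_setaf (A : finType) (X : {set {set A} * A}) : adf A :=
  ADF (fun b a => [exists B : {set A}, ((B, a) \in X) && (b \in B)])
      (fun a => bigAnd [seq bigOr [seq FNeg (FVar a') | a' <- enum (mem p.1)]
                       | p : {set A} * A <- enum (mem X) & p.2 == a]).

Inductive formalism := AFs | SETAFs | BADFs | ADFs.

Definition in_formalism (F : formalism) (A : finType) (D : adf A) : Prop :=
  match F with
  | AFs => exists R : rel A, D = adf_of_af R
  | SETAFs => exists X : {set {set A} * A}, setaf_wf X /\ D = adf_of_setaf X
  | BADFs => adf_wf D /\ forall b a, link D b a -> supporting D b a \/ attacking D b a
  | ADFs => adf_wf D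
  end.

Definition exp_leq (F1 : formalism) (s1 : semantics) (F2 : formalism) (s2 : semantics) : Prop :=
  forall (A : finType) (D1 : adf A), in_formalism F1 D1 ->
    exists D2 : adf A, in_formalism F2 D2 /\ forall v, sem s1 D1 v <-> sem s2 D2 v.

(* Every AF is, up to equivalence of acceptance formulas, a SETAF, a BADF and
   an ADF, so it suffices to exhibit, for each ordered pair of distinct
   semantics, an AF whose sigma1-signature is not the sigma2-signature of any
   ADF.  Three AFs suffice: one unattacked argument, one self-attacking
   argument, and two arguments attacking each other.  They are told apart by
   properties shared by all ADFs: the all-undecided interpretation is always
   admissible and never a two-valued model; preferred interpretations form a
   nonempty antichain; two complete interpretations that disagree everywhere
   force the all-undecided one to be complete; and on a single statement,
   if the all-undecided and the all-true interpretations are complete, so is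
   the all-false one. *)

From mathcomp Require Import all_boot.
Set Implicit Arguments. Unset Strict Implicit. Unset Printing Implicit Defensive.

Section ThreeValued.
Variable A : finType.
Implicit Types (D : adf A) (v w : interp A) (u : {ffun A -> bool}).

Definition vbot : interp A := [ffun _ => None].
Definition two_valued v := forall a, v a != None.
Definition bool_of_interp v : {ffun A -> bool} := [ffun a => odflt false (v a)].

Lemma leq_iP v w : reflect (forall a, v a = None \/ v a = w a) (leq_i v w).
Proof.
apply: (iffP forallP) => H a.
- by case/orP: (H a) => /eqP; auto.
- by case: (H a) => ->; rewrite eqxx ?orbT.
Qed.

Lemma leq_i_refl v : leq_i v v.
Proof. by apply/leq_iP => a; right. Qed.

Lemma vbot_leq_i v : leq_i vbot v.
Proof. by apply/leq_iP => a; left; rewrite ffunE. Qed.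

Lemma ext2_vbot u : ext2 vbot u.
Proof. by apply/forallP => a; rewrite ffunE. Qed.

Lemma ext2_bool_of_interp v : ext2 v (bool_of_interp v).
Proof. by apply/forallP => a; rewrite ffunE; case: (v a). Qed.

Lemma ext2_two_valued v u : two_valued v -> ext2 v u = (u == bool_of_interp v).
Proof.
move=> v2; apply/forallP/eqP => [ext_u|->]; last exact/forallP/ext2_bool_of_interp.
apply/ffunP => a; rewrite ffunE; move: (ext_u a) (v2 a).
by case: (v a) => [b /eqP ->|].
Qed.

Lemma ext2_leq_i v w u : leq_i v w -> ext2 w u -> ext2 v u.
Proof.
move=> /leq_iP vw /forallP ext_u; apply/forallP => a.
by case: (vw a) => [->//|->]; apply: ext_u.
Qed.

Lemma forall_ext2_two_valued v (P : pred {ffun A -> bool}) :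
  two_valued v -> [forall u, ext2 v u ==> P u] = P (bool_of_interp v).
Proof.
move=> v2; apply/forallP/idP => [/(_ (bool_of_interp v))|Pv u].
  by rewrite ext2_bool_of_interp.
by rewrite ext2_two_valued //; apply/implyP => /eqP ->.
Qed.

Lemma Gamma_two_valued D v a :
  two_valued v -> Gamma D v a = Some (feval (bool_of_interp v) (acc D a)).
Proof.
move=> v2; rewrite ffunE !forall_ext2_two_valued //=.
by case: feval.
Qed.

Lemma Gamma_vbot_undec D a u u' :
  feval u (acc D a) -> ~~ feval u' (acc D a) -> Gamma D vbot a = None.
Proof.
move=> acc_u acc_u'; rewrite ffunE.
case: ifP => [/forallP/(_ u')|_]; first by rewrite ext2_vbot (negbTE acc_u').
by case: ifP => [/forallP/(_ u)|//]; rewrite ext2_vbot acc_u.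
Qed.

Lemma leq_i_Gamma D v w : leq_i v w -> leq_i (Gamma D v) (Gamma D w).
Proof.
move=> vw; apply/leq_iP => a; rewrite !ffunE.
have lift (P : pred {ffun A -> bool}) :
    [forall u, ext2 v u ==> P u] -> [forall u, ext2 w u ==> P u].
  by move=> /forallP Pv; apply/forallP => u; apply/implyP => /(ext2_leq_i vw)/(implyP (Pv u)).
case: ifP => [/lift->|_]; first by right.
case: ifP => [/lift Nw|_]; last by left.
right; rewrite Nw ifF //; apply/negP => /forallP/(_ (bool_of_interp w)).
by rewrite ext2_bool_of_interp (negbTE (implyP (forallP Nw _) (ext2_bool_of_interp w))).
Qed.

Lemma Gamma_eq_feval D D' :
  (forall a u, feval u (acc D a) = feval u (acc D' a)) -> Gamma D =1 Gamma D'.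
Proof.
move=> accE v; apply/ffunP => a; rewrite !ffunE.
under eq_forallb => u do rewrite accE.
by case: ifP => // _; under eq_forallb => u do rewrite accE.
Qed.

Lemma sem_eq_Gamma s D D' v : Gamma D =1 Gamma D' -> sem s D v <-> sem s D' v.
Proof.
move=> GammaE; case: s => /=; rewrite /preferred /two_valued_model /admissible /complete ?GammaE //.
by split=> -[adm_v max_v]; split=> // w; [rewrite -GammaE | rewrite GammaE]; apply: max_v.
Qed.

Lemma complete_admissible D v : complete D v -> admissible D v.
Proof. by rewrite /admissible /complete => ->; apply: leq_i_refl. Qed.

Lemma vbot_admissible D : admissible D vbot.
Proof. exact: vbot_leq_i. Qed.

Lemma two_valued_leq_i v w : two_valued v -> leq_i v w -> w = v.
Proof.
move=> v2 /leq_iP vw; apply/ffunP => a.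
by case: (vw a) => va; [move: (v2 a); rewrite va | rewrite va].
Qed.

Lemma two_valued_model_preferred D v : two_valued_model D v -> preferred D v.
Proof.
move=> [v2 Gv]; split; first exact: complete_admissible.
by move=> w _; apply: two_valued_leq_i.
Qed.

Lemma vbot_not_two_valued (a : A) : ~ two_valued vbot.
Proof. by move=> /(_ a); rewrite ffunE. Qed.

Lemma preferred_leq_i D v w : preferred D v -> preferred D w -> leq_i v w -> w = v.
Proof. by move=> [_ max_v] [adm_w _]; apply: max_v. Qed.

Lemma preferred_exists D : exists v, preferred D v.
Proof.
pose size_i v := #|[pred a | v a != None]|.
have [v adm_v max_v] := @arg_maxnP _ vbot (fun v => leq_i v (Gamma D v)) size_i (vbot_leq_i _).
exists v; split=> // w adm_w /leq_iP vw.
have sub_vw : [pred a | v a != None] \subset [pred a | w a != None].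
  by apply/subsetP => a; rewrite !inE; case: (vw a) => [->|<-].
have /subset_cardP/(_ sub_vw) same_dom : size_i v = size_i w.
  by apply/eqP; rewrite eqn_leq subset_leq_card //; apply: max_v.
apply/ffunP => a; case: (vw a) => [va|->//]; move: (same_dom a).
by rewrite !inE va; case: (w a).
Qed.

Lemma complete_vbot D v w :
  (forall a, v a != w a) -> complete D v -> complete D w -> complete D vbot.
Proof.
move=> vw Gv Gw.
(* [Gamma vbot] lies below both [v] and [w], which have no common information. *)
have /leq_iP le_v := leq_i_Gamma D (vbot_leq_i v).
have /leq_iP le_w := leq_i_Gamma D (vbot_leq_i w).
rewrite Gv in le_v; rewrite Gw in le_w.
apply/ffunP => a; rewrite [vbot a]ffunE.
case: (le_v a) => // Ev; case: (le_w a) => // Ew.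
by move: (vw a); rewrite -Ev -Ew eqxx.
Qed.

Lemma feval_bigAnd (u : A -> bool) s : feval u (bigAnd s) = all (feval u) s.
Proof. by elim: s => //= phi s ->. Qed.

Lemma feval_bigOr (u : A -> bool) s : feval u (bigOr s) = has (feval u) s.
Proof. by elim: s => //= phi s ->. Qed.

Lemma occurs_bigAnd (b : A) s : occurs b (bigAnd s) = has (occurs b) s.
Proof. by elim: s => //= phi s ->. Qed.

Lemma feval_af (R : rel A) (u : A -> bool) a :
  feval u (acc (adf_of_af R) a) = [forall b, R b a ==> ~~ u b].
Proof.
rewrite /= feval_bigAnd all_map all_filter.
apply/allP/forallP => [all_u b|all_u b _]; last exact: all_u.
by apply: all_u; rewrite mem_enum.
Qed.

Lemma feval_setaf (X : {set {set A} * A}) (u : A -> bool) a :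
  feval u (acc (adf_of_setaf X) a) =
  [forall p in X, (p.2 == a) ==> [exists b in p.1, ~~ u b]].
Proof.
rewrite /= feval_bigAnd all_map all_filter.
apply/allP/forallP => all_u p; rewrite ?mem_enum.
- apply/implyP => pX; move: (all_u p); rewrite mem_enum => /(_ pX) /=.
  rewrite feval_bigOr has_map; case: (_ == _) => //= /hasP[b].
  by rewrite mem_enum => bp u_b; apply/existsP; exists b; rewrite bp.
- move=> pX /=; move: (implyP (all_u p) pX); case: (_ == _) => //= /existsP[b /andP[bp u_b]].
  by rewrite feval_bigOr has_map; apply/hasP; exists b; rewrite ?mem_enum.
Qed.

Lemma af_wf (R : rel A) : adf_wf (adf_of_af R).
Proof.
move=> a b; rewrite /= occurs_bigAnd has_map => /hasP[c].
by rewrite mem_filter => /andP[Rca _] /= /eqP <-.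
Qed.

Lemma af_attacking (R : rel A) b a : attacking (adf_of_af R) b a.
Proof.
move=> u; rewrite !feval_af => /forallP unatt; apply/forallP => c.
by move: (unatt c); rewrite !ffunE; case: (c == b); rewrite ?implybT.
Qed.

Definition setaf_of_af (R : rel A) : {set {set A} * A} :=
  [set ([set p.1], p.2) | p in [set p : A * A | R p.1 p.2]].

Lemma setaf_of_af_wf (R : rel A) : setaf_wf (setaf_of_af R).
Proof.
move=> B a /imsetP[[b a'] _ [-> _]].
by apply/set0Pn; exists b; rewrite set11.
Qed.

Lemma feval_setaf_of_af (R : rel A) (u : A -> bool) a :
  feval u (acc (adf_of_setaf (setaf_of_af R)) a) = feval u (acc (adf_of_af R) a).
Proof.
rewrite feval_setaf feval_af; apply/forallP/forallP => unatt b.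
- apply/implyP => Rba.
  have /(implyP (unatt ([set b], a))) : ([set b], a) \in setaf_of_af R.
    by apply/imsetP; exists (b, a); rewrite ?inE.
  by rewrite eqxx => /existsP[c /andP[/set1P -> u_b]].
- apply/implyP => /imsetP[[c a'] /[!inE] /= Rca ->] /=; apply/implyP => /eqP Ea.
  by apply/existsP; exists c; rewrite set11 (implyP (unatt c)) // -Ea.
Qed.

Lemma af_in_formalism (R : rel A) F :
  exists D, in_formalism F D /\ Gamma D =1 Gamma (adf_of_af R).
Proof.
case: F.
- by exists (adf_of_af R); split=> //; exists R.
- exists (adf_of_setaf (setaf_of_af R)); split.
    by exists (setaf_of_af R); split=> //; apply: setaf_of_af_wf.
  by apply: Gamma_eq_feval => a u; apply: feval_setaf_of_af.
- exists (adf_of_af R); split=> //; split; first exact: af_wf.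
  by move=> b a _; right; apply: af_attacking.
- by exists (adf_of_af R); split=> //; apply: af_wf.
Qed.

End ThreeValued.

Arguments vbot {A}.

Definition vt : interp unit := [ffun _ => Some true].
Definition vf : interp unit := [ffun _ => Some false].

Lemma vt_two_valued : two_valued vt. Proof. by move=> a; rewrite ffunE. Qed.
Lemma vf_two_valued : two_valued vf. Proof. by move=> a; rewrite ffunE. Qed.

Lemma vt_neq_vbot : vt <> vbot.
Proof. by move/ffunP/(_ tt); rewrite !ffunE. Qed.

Lemma complete_vf (D : adf unit) : complete D vbot -> complete D vt -> complete D vf.
Proof.
(* [vbot] complete makes the acceptance formula non-constant, and [vt] complete
   then forces it to be the identity. *)
move=> Gbot Gt.
have : Gamma D vbot tt = None by rewrite Gbot ffunE.
rewrite ffunE; case: ifP => // /negbT/forallPn[u]; rewrite ext2_vbot /= => acc_u _.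
have acc_t : feval (bool_of_interp vt) (acc D tt).
  by move: (Gamma_two_valued D tt vt_two_valued); rewrite Gt ffunE => -[].
have u_f : u = bool_of_interp vf.
  apply/ffunP => -[]; rewrite !ffunE /=; case E: (u tt) => //; move: acc_u.
  suff -> : u = bool_of_interp vt by rewrite acc_t.
  by apply/ffunP => -[]; rewrite !ffunE.
apply/ffunP => -[]; rewrite Gamma_two_valued; last exact: vf_two_valued.
by rewrite -u_f (negbTE acc_u) ffunE.
Qed.

Definition af_top : adf unit := adf_of_af (fun _ _ => false).

Lemma Gamma_af_top (v : interp unit) : Gamma af_top v = vt.
Proof.
apply/ffunP => -[]; rewrite !ffunE ifT //.
by apply/forallP => u; rewrite feval_af; apply/implyP => _; apply/forallP.
Qed.

Lemma af_top_admissible_vt : admissible af_top vt.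
Proof. by rewrite /admissible Gamma_af_top; apply: leq_i_refl. Qed.

Definition af_loop : adf unit := adf_of_af (fun _ _ => true).

Lemma Gamma_af_loop_two_valued (v : interp unit) b :
  v tt = Some b -> Gamma af_loop v tt = Some (~~ b).
Proof.
move=> vb; rewrite Gamma_two_valued; last by case; rewrite vb.
rewrite feval_af; congr Some; apply/forallP/idP => [/(_ tt)|nb []] /=; rewrite ffunE vb //.
Qed.

Lemma Gamma_af_loop_vbot : Gamma af_loop vbot = vbot.
Proof.
apply/ffunP => -[]; rewrite [vbot _]ffunE.
by apply: (Gamma_vbot_undec (u := [ffun => false]) (u' := [ffun => true]));
  rewrite feval_af; [apply/forallP => -[] | apply/forallPn; exists tt]; rewrite ffunE.
Qed.

Lemma af_loop_admissible (v : interp unit) : admissible af_loop v -> v = vbot.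
Proof.
move=> /leq_iP/(_ tt); case vb: (v tt) => [b|] [] //.
  by rewrite (Gamma_af_loop_two_valued vb) => -[]; case: b {vb}.
all: by move=> _; apply/ffunP => -[]; rewrite vb ffunE.
Qed.

Lemma af_loop_no_model (v : interp unit) : ~ two_valued_model af_loop v.
Proof.
move=> [v2 Gv]; move: (v2 tt); case vb: (v tt) => [b|] // _.
by move: (Gamma_af_loop_two_valued vb); rewrite Gv vb => -[]; case: b {vb}.
Qed.

Definition af_mutual : adf bool := adf_of_af (fun b a => b != a).

Definition vtf : interp bool := [ffun b => Some b].
Definition vft : interp bool := [ffun b => Some (~~ b)].

Lemma feval_af_mutual (u : bool -> bool) a : feval u (acc af_mutual a) = ~~ u (~~ a).
Proof.
rewrite feval_af; apply/forallP/idP => [/(_ (~~ a))|nu b]; first by case: a.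
by apply/implyP; case: a b nu => -[].
Qed.

Lemma af_mutual_model_vtf : two_valued_model af_mutual vtf.
Proof.
have vtf2 : two_valued vtf by move=> b; rewrite ffunE.
split=> //; apply/ffunP => a; rewrite Gamma_two_valued //.
by rewrite feval_af_mutual !ffunE negbK.
Qed.

Lemma af_mutual_model_vft : two_valued_model af_mutual vft.
Proof.
have vft2 : two_valued vft by move=> b; rewrite ffunE.
split=> //; apply/ffunP => a; rewrite Gamma_two_valued //.
by rewrite feval_af_mutual !ffunE /= negbK.
Qed.

Lemma Gamma_af_mutual_vbot : Gamma af_mutual vbot = vbot.
Proof.
apply/ffunP => a; rewrite [vbot _]ffunE.
by apply: (Gamma_vbot_undec (u := [ffun => false]) (u' := [ffun => true]));
  rewrite feval_af_mutual ffunE.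
Qed.

Lemma vtf_neq_vbot : vtf <> vbot.
Proof. by move/ffunP/(_ true); rewrite !ffunE. Qed.


Section Separations.
Implicit Types (D : adf unit) (E : adf bool).

Lemma af_top_adm_not_com D : ~ (forall v, admissible af_top v <-> complete D v).
Proof.
move=> sig; have /sig Gbot := vbot_admissible af_top.
have /sig Gt := af_top_admissible_vt.
have /sig := complete_vf Gbot Gt.
by rewrite /admissible Gamma_af_top => /leq_iP/(_ tt); rewrite !ffunE => -[].
Qed.

Lemma af_top_adm_not_prf D : ~ (forall v, admissible af_top v <-> preferred D v).
Proof.
move=> sig; have /sig prf_bot := vbot_admissible af_top.
have /sig prf_t := af_top_admissible_vt.
exact/vt_neq_vbot/(preferred_leq_i prf_bot prf_t (vbot_leq_i _)).
Qed.

Lemma af_top_adm_not_mod D : ~ (forall v, admissible af_top v <-> two_valued_model D v).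
Proof.
by move=> sig; have /sig[/(vbot_not_two_valued tt)] := vbot_admissible af_top.
Qed.

Lemma af_top_com_not_adm D : ~ (forall v, complete af_top v <-> admissible D v).
Proof.
move=> sig; have /sig := vbot_admissible D.
by rewrite /complete Gamma_af_top; apply: vt_neq_vbot.
Qed.

Lemma af_mutual_com_not_prf E : ~ (forall v, complete af_mutual v <-> preferred E v).
Proof.
move=> sig; have /sig prf_bot := Gamma_af_mutual_vbot.
have [_ /sig prf_tf] := af_mutual_model_vtf.
exact/vtf_neq_vbot/(preferred_leq_i prf_bot prf_tf (vbot_leq_i _)).
Qed.

Lemma af_loop_com_not_mod D : ~ (forall v, complete af_loop v <-> two_valued_model D v).
Proof.
by move=> sig; have /sig[/(vbot_not_two_valued tt)] := Gamma_af_loop_vbot.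
Qed.

Lemma af_top_prf_not_adm D : ~ (forall v, preferred af_top v <-> admissible D v).
Proof.
move=> sig; have /sig[_ max_bot] := vbot_admissible D.
exact/vt_neq_vbot/(max_bot _ af_top_admissible_vt (vbot_leq_i _)).
Qed.

Lemma af_mutual_prf_not_com E : ~ (forall v, preferred af_mutual v <-> complete E v).
Proof.
move=> sig.
have /two_valued_model_preferred/sig com_tf := af_mutual_model_vtf.
have /two_valued_model_preferred/sig com_ft := af_mutual_model_vft.
have /sig[_ max_bot] : complete E vbot.
  by apply: (complete_vbot _ com_tf com_ft) => a; rewrite !ffunE; case: a.
have [_ /complete_admissible adm_tf] := af_mutual_model_vtf.
exact/vtf_neq_vbot/(max_bot _ adm_tf (vbot_leq_i _)).
Qed.

Lemma af_loop_prf_not_mod D : ~ (forall v, preferred af_loop v <-> two_valued_model D v).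
Proof.
move=> sig; suff /sig[/(vbot_not_two_valued tt)] : preferred af_loop vbot by [].
by split=> [|w /af_loop_admissible]; first exact: vbot_admissible.
Qed.

Lemma af_top_mod_not_adm D : ~ (forall v, two_valued_model af_top v <-> admissible D v).
Proof.
by move=> sig; have /sig[/(vbot_not_two_valued tt)] := vbot_admissible D.
Qed.

Lemma af_mutual_mod_not_com E : ~ (forall v, two_valued_model af_mutual v <-> complete E v).
Proof.
move=> sig; have /sig com_tf := af_mutual_model_vtf.
have /sig com_ft := af_mutual_model_vft.
suff /sig[/(vbot_not_two_valued true)] : complete E vbot by [].
by apply: (complete_vbot _ com_tf com_ft) => a; rewrite !ffunE; case: a.
Qed.

Lemma af_loop_mod_not_prf D : ~ (forall v, two_valued_model af_loop v <-> preferred D v).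
Proof. by move=> sig; have [v /sig] := preferred_exists D; apply: af_loop_no_model. Qed.

End Separations.

Lemma signature_separation s1 s2 : s1 <> s2 ->
  exists (A : finType) (R : rel A),
    forall D : adf A, ~ (forall v, sem s1 (adf_of_af R) v <-> sem s2 D v).
Proof.
case: s1; case: s2 => // _; do 2 eexists.
- exact: af_top_adm_not_com.
- exact: af_top_adm_not_prf.
- exact: af_top_adm_not_mod.
- exact: af_top_com_not_adm.
- exact: af_mutual_com_not_prf.
- exact: af_loop_com_not_mod.
- exact: af_top_prf_not_adm.
- exact: af_mutual_prf_not_com.
- exact: af_loop_prf_not_mod.
- exact: af_top_mod_not_adm.
- exact: af_mutual_mod_not_com.
- exact: af_loop_mod_not_prf.
Qed.

Lemma not_exp_leq F1 F2 s1 s2 : s1 <> s2 -> ~ exp_leq F1 s1 F2 s2.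
Proof.
move=> /signature_separation[A [R sepR]] leq12.
have [D1 [D1_F1 GammaE]] := af_in_formalism R F1.
have [D2 [_ sig12]] := leq12 A D1 D1_F1.
apply: (sepR D2) => v; apply: iff_trans (sig12 v).
exact: iff_sym (sem_eq_Gamma s1 v GammaE).
Qed.

Theorem proposition6 :
  forall (F1 F2 : formalism) (s1 s2 : semantics), s1 <> s2 ->
    ~ exp_leq F1 s1 F2 s2 /\ ~ exp_leq F2 s2 F1 s1.
Proof.
move=> F1 F2 s1 s2 s12.
by split; apply: not_exp_leq => // s21; apply: s12.
Qed.
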